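(* Let $\Gamma$ be a graph and let $f:\Gamma\to\Gamma$ be an irreducible graph map which is a homotopy equivalence, and suppose $f$ has a fold decomposition consisting of $m$ folds. Let $n=|\mathcal{E}\Gamma|$. Then $$(m+1)^{1/n}\le \lambda_f,$$ where $\lambda_f$ is the largest eigenvalue of the transition matrix $T(f)$.
   Context: A graph $\Gamma$ is a finite 1-dimensional CW complex (multiple edges and loops allowed) with a chosen orientation on each edge; $\mathcal{V}\Gamma$ is its vertex set, $\mathcal{E}\Gamma$ its set of (positively oriented) edges, $\mathcal{E}^{\pm}\Gamma$ the set of edges with both orientations, $\bar e$ the reverse of $e$, and $\iota(e),\tau(e)$ the initial and terminal vertices. An edge path is a nonempty concatenation $u=e_1\cdots e_k$ of oriented edges with $\tau(e_i)=\iota(e_{i+1})$; $|u|=k$ counts edges without cancelling backtracks, and $u$ traverses an edge $e$ if $e$ or $\bar e$ occurs in it. A graph map $f:\Gamma_1\to\Gamma_2$ consists of a vertex map $f_V$ and an assignment of an edge path $f(e)$ in $\Gamma_2$ to each $e\in\mathcal{E}^\pm\Gamma_1$ with $\iota(f(e))=f_V(\iota(e))$ and $f(\bar e)=\overline{f(e)}$; it extends to edge paths by concatenation (no tightening), and is regarded as a continuous map. A graph isomorphism is a graph map with $f_V$ bijective which restricts to a bijection from $\mathcal{E}^\pm\Gamma_1$ onto the single edges $\mathcal{E}^\pm\Gamma_2$. For a self graph map $f:\Gamma\to\Gamma$ with edges ordered $e_1,\dots,e_n$, the transition matrix $T(f)$ has $(i,j)$ entry equal to the number of times $f(e_i)$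 traverses $e_j$ (in either direction). $f$ is irreducible if $T(f)$ is an irreducible matrix (for every $i,j$ some power $T(f)^k$ has positive $(i,j)$ entry) and every vertex of $\Gamma$ has valence at least $3$. Folds: let $e_0,e_1\in\mathcal{E}^\pm\Gamma$ be distinct oriented edges with $e_1\ne\bar e_0$ and $\iota(e_0)=\iota(e_1)$. (i) The proper full fold of $e_1$ over $e_0$: subdivide $e_1$ as $e_1''e_1'$ and identify $e_1''$ with $e_0$; the quotient graph map sends $e_1\mapsto e_0e_1'$ and fixes all other edges. (ii) The complete fold of $e_0,e_1$: identify $e_0$ and $e_1$ entirely (quotient map). (iii) The partial fold of $e_1$ over $e_0$: subdivide $e_0=e_0'e_0''$ and $e_1=e_1''e_1'$ and identify $e_1''$ with $e_0'$; the quotient map sends $e_0\mapsto e_0'e_0''$, $e_1\mapsto e_0'e_1'$, other edges fixed. A fold decomposition of $f:\Gamma\to\Gamma$ consisting of $m$ folds is an expression $f=h\circ f_m\circ\cdots\circ f_1$ where $\Gamma_1=\Gamma$, each $f_i:\Gamma_i\to\Gamma_{i+1}$ is a fold, and $h:\Gamma_{m+1}\to\Gamma$ is a graph isomorphism. *)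

From HB Require Import structures.
From mathcomp Require Import all_boot all_order all_algebra all_field.
Set Implicit Arguments. Unset Strict Implicit. Unset Printing Implicit Defensive.
Import Order.TTheory GRing.Theory Num.Theory.

(* A finite graph: vertices 'I_nV, positively oriented edges 'I_nE,
   each edge e with initial vertex src e and terminal vertex tgt e.
   Multiple edges and loops are allowed. *)
Record graph := Graph {
  nV : nat;
  nE : nat;
  src : 'I_nE -> 'I_nV;
  tgt : 'I_nE -> 'I_nV }.

Definition vert (G : graph) := 'I_(nV G).
Definition edge (G : graph) := 'I_(nE G).
(* oriented edges: (e, true) = e, (e, false) = \bar e *)
Definition dart (G : graph) := (edge G * bool)%type.

Section Darts.
Variable G : graph.
Definition dsrc (d : dart G) : vert G := if d.2 then src d.1 else tgt d.1.
Definition dtgt (d : dart G) : vert G := if d.2 then tgt d.1 else src d.1.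
Definition drev (d : dart G) : dart G := (d.1, ~~ d.2).
Definition prev (p : seq (dart G)) : seq (dart G) := rev (map drev p).
Definition adj (d d' : dart G) : bool := dtgt d == dsrc d'.

Definition epath_from_to (p : seq (dart G)) (x y : vert G) : bool :=
  match p with
  | [::] => false
  | d :: p' => [&& path adj d p', dsrc d == x & dtgt (last d p') == y]
  end.

Definition walk_from_to (p : seq (dart G)) (x y : vert G) : bool :=
  match p with
  | [::] => x == y
  | d :: p' => [&& path adj d p', dsrc d == x & dtgt (last d p') == y]
  end.

(* free reduction (cancelling backtracks d \bar d) *)
Definition reduce (p : seq (dart G)) : seq (dart G) :=
  foldr (fun d acc => match acc with
                      | d' :: acc' => if d' == drev d then acc' else d :: acc
                      | [::] => [:: d] end) [::] p.

(* valence of a vertex (loops count twice) *)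
Definition valence (v : vert G) : nat := #|[pred d : dart G | dsrc d == v]|.
End Darts.

(* data of a map: a vertex map and, for each positively oriented edge,
   an edge path; the image of \bar e is the reverse path *)
Record gmap (G1 G2 : graph) := GMap {
  mV : vert G1 -> vert G2;
  mE : edge G1 -> seq (dart G2) }.

Definition mD G1 G2 (f : gmap G1 G2) (d : dart G1) : seq (dart G2) :=
  if d.2 then mE f d.1 else prev (mE f d.1).

Definition is_graph_map G1 G2 (f : gmap G1 G2) : Prop :=
  forall e : edge G1, epath_from_to (mE f e) (mV f (src e)) (mV f (tgt e)).

(* a combinatorial map, where edges may also be collapsed to a vertex *)
Definition is_cmap G1 G2 (f : gmap G1 G2) : Prop :=
  forall e : edge G1, walk_from_to (mE f e) (mV f (src e)) (mV f (tgt e)).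

(* composition g o f, extended to edge paths by concatenation (no tightening) *)
Definition comp G1 G2 G3 (g : gmap G2 G3) (f : gmap G1 G2) : gmap G1 G3 :=
  GMap (fun v => mV g (mV f v)) (fun e => flatten (map (mD g) (mE f e))).

Definition gid (G : graph) : gmap G G := GMap (fun v => v) (fun e => [:: (e, true)]).

Definition gmap_eq G1 G2 (f g : gmap G1 G2) : Prop :=
  (forall v, mV f v = mV g v) /\ (forall e, mE f e = mE g e).

Definition is_iso G1 G2 (f : gmap G1 G2) : Prop :=
  is_graph_map f /\ bijective (mV f) /\
  exists s : dart G1 -> dart G2, bijective s /\ forall d, mD f d = [:: s d].

(* Combinatorial model of free homotopy of maps of graphs: f ~ g iff there are
   paths q_v from f(v) to g(v) with f(e) q_{tau e} ~ q_{iota e} g(e) rel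
   endpoints, i.e. with equal free reductions. *)
Definition homotopic G1 G2 (f g : gmap G1 G2) : Prop :=
  exists q : vert G1 -> seq (dart G2),
    (forall v, walk_from_to (q v) (mV f v) (mV g v)) /\
    (forall e, reduce (mE f e ++ q (tgt e)) = reduce (q (src e) ++ mE g e)).

Definition is_heq G1 G2 (f : gmap G1 G2) : Prop :=
  exists g : gmap G2 G1, is_cmap g /\
    homotopic (comp g f) (gid G1) /\ homotopic (comp f g) (gid G2).

Section Folds.
Variables G1 G2 : graph.
Implicit Types f : gmap G1 G2.

(* proper full fold of e1 over e0 (up to an isomorphism of the target):
   e1 |-> e0 e1', all other edges map to single edges, bijectively *)
Definition full_fold f (e0 e1 : dart G1) : Prop :=
  bijective (mV f) /\
  exists (s : dart G1 -> dart G2) (x : dart G2),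
    (forall d, d.1 != e1.1 -> mD f d = [:: s d]) /\
    mD f e1 = [:: s e0; x] /\
    (forall d d', d.1 != e1.1 -> d'.1 != e1.1 -> s d = s d' -> d = d') /\
    (forall d, d.1 != e1.1 -> (s d).1 != x.1) /\
    (forall e2 : edge G2, e2 = x.1 \/ exists d, d.1 != e1.1 /\ (s d).1 = e2).

(* complete fold of e0 and e1: identify them (and their endpoints) entirely *)
Definition complete_fold f (e0 e1 : dart G1) : Prop :=
  (forall v w, mV f v = mV f w <->
     v = w \/ (v = dtgt e0 /\ w = dtgt e1) \/ (v = dtgt e1 /\ w = dtgt e0)) /\
  (forall y, exists v, mV f v = y) /\
  exists s : dart G1 -> dart G2,
    (forall d, mD f d = [:: s d]) /\
    (forall d d', s d = s d' <->
       d = d' \/ (d = e0 /\ d' = e1) \/ (d = e1 /\ d' = e0)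
       \/ (d = drev e0 /\ d' = drev e1) \/ (d = drev e1 /\ d' = drev e0)) /\
    (forall y, exists d, s d = y).

(* partial fold of e1 over e0: e0 |-> e0' e0'', e1 |-> e0' e1', with a new
   vertex u = tau(e0') *)
Definition partial_fold f (e0 e1 : dart G1) : Prop :=
  injective (mV f) /\
  exists (u : vert G2) (s : dart G1 -> dart G2) (a b c : dart G2),
    (forall v, mV f v != u) /\ (forall y, y = u \/ exists v, mV f v = y) /\
    dtgt a = u /\
    (forall d, d.1 != e0.1 -> d.1 != e1.1 -> mD f d = [:: s d]) /\
    mD f e0 = [:: a; b] /\ mD f e1 = [:: a; c] /\
    uniq [:: a.1; b.1; c.1] /\
    (forall d d', d.1 != e0.1 -> d.1 != e1.1 -> d'.1 != e0.1 -> d'.1 != e1.1 ->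
       s d = s d' -> d = d') /\
    (forall d, d.1 != e0.1 -> d.1 != e1.1 -> (s d).1 \notin [:: a.1; b.1; c.1]) /\
    (forall e2 : edge G2, e2 \in [:: a.1; b.1; c.1] \/
       exists d, [/\ d.1 != e0.1, d.1 != e1.1 & (s d).1 = e2]).

Definition is_fold f : Prop :=
  is_graph_map f /\
  exists e0 e1 : dart G1,
    [/\ e0 != e1, e1 != drev e0, dsrc e0 = dsrc e1 &
        full_fold f e0 e1 \/ complete_fold f e0 e1 \/ partial_fold f e0 e1].
End Folds.

(* fold_chain f m : f = h o f_m o ... o f_1 with folds f_i and an isomorphism h *)
Inductive fold_chain : forall G G' : graph, gmap G G' -> nat -> Prop :=
| fc_iso G G' (h : gmap G G') : is_iso h -> fold_chain h 0
| fc_step G G1 G' (f1 : gmap G G1) (g : gmap G1 G') (f : gmap G G') m :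
    is_fold f1 -> fold_chain g m -> gmap_eq f (comp g f1) -> fold_chain f m.+1.

Definition has_fold_decomposition G (f : gmap G G) (m : nat) : Prop :=
  fold_chain f m.

Local Open Scope ring_scope.

Definition transition G (f : gmap G G) : 'M[algC]_(nE G) :=
  \matrix_(i, j) ((count (fun d : dart G => d.1 == j) (mE f i))%:R).

Definition irreducible_mx n (A : 'M[algC]_n) : Prop :=
  forall i j, exists k, (0 < k)%N /\ 0 < (A ^+ k) i j.

Definition irreducible_map G (f : gmap G G) : Prop :=
  irreducible_mx (transition f) /\ forall v : vert G, (3 <= valence v)%N.

Definition largest_eigenvalue n (A : 'M[algC]_n) (lam : algC) : Prop :=
  eigenvalue A lam /\ lam \is Num.real /\
  forall mu, eigenvalue A mu -> mu \is Num.real -> mu <= lam.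

(* Each fold strictly increases the total length sum_e |f(e)| of the image
   paths, while an isomorphism has total length |EG| = n; so the m folds give
   sum_(i,j) T_ij >= n + m.  In the transition graph of the irreducible matrix
   T every edge is reached from every other one by a walk of length < n, and at
   each step a reached row l adds at least (sum_j T_lj) - 1 new walks; hence
   every row sum of T^n is at least sum_(i,j) T_ij - n + 1 >= m + 1.
   Finally, if all row sums of T^n exceed z^n for some z > 0, then
   u = sum_k z^(n-1-k) T^k 1 is a positive vector with T u > z u.  Were no real
   eigenvalue >= z, a continuity argument would make v = adj(zI - T) 1 positive
   with (zI - T) v = det(zI - T) 1 > 0, and comparing u and v at the index
   maximising u_i / v_i gives a contradiction. *)

From Pilot Require Import Defs.
From HB Require Import structures.
From mathcomp Require Import all_boot all_order all_algebra all_field.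
From mathcomp Require Import polyrcf zify.
Import Order.TTheory GRing.Theory Num.Theory Num.Def.

Set Implicit Arguments.
Unset Strict Implicit.
Unset Printing Implicit Defensive.

(** * Folds lengthen graph maps *)

Definition on_edge G (y : edge G) (d : dart G) : bool := d.1 == y.

Lemma count_on_edge_sum G (s : seq (dart G)) :
  \sum_(y < nE G) count (on_edge y) s = size s.
Proof.
elim: s => [|d s IHs] /=; first by rewrite big1.
rewrite big_split /= IHs (bigD1 d.1) //= /on_edge eqxx big1 // => y /negPf.
by rewrite eq_sym => ->.
Qed.

Lemma sum_dart_edge G (s : seq (dart G)) (w : edge G -> nat) :
  \sum_(d <- s) w d.1 = \sum_(y < nE G) w y * count (on_edge y) s.
Proof.
elim: s => [|d s IHs]; first by rewrite big_nil big1 // => y _; rewrite muln0.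
rewrite big_cons IHs /=; under [RHS]eq_bigr do rewrite mulnDr.
rewrite big_split /=; congr (_ + _).
rewrite (bigD1 d.1) //= /on_edge eqxx muln1 big1 ?addn0 // => y /negPf.
by rewrite eq_sym => ->; rewrite muln0.
Qed.

Definition gmap_length G G' (f : gmap G G') : nat := \sum_(e < nE G) size (mE f e).

Definition traversals G G' (f : gmap G G') (y : edge G') : nat :=
  \sum_(e < nE G) count (on_edge y) (mE f e).

Lemma size_mD G G' (f : gmap G G') d : size (mD f d) = size (mE f d.1).
Proof. by rewrite /mD; case: d.2; rewrite // /Defs.prev size_rev size_map. Qed.

Lemma has_on_edge_mD G G' (f : gmap G G') d (y : edge G') :
  has (on_edge y) (mD f d) = has (on_edge y) (mE f d.1).
Proof. by rewrite /mD; case: d.2; rewrite // /Defs.prev has_rev has_map. Qed.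

Lemma traversals_gt0 G G' (f : gmap G G') d (y : edge G') :
  has (on_edge y) (mD f d) -> 0 < traversals f y.
Proof. by rewrite has_on_edge_mD has_count /traversals (bigD1 d.1) //= => /ltn_addr->. Qed.

Lemma traversals_gt1 G G' (f : gmap G G') d d' (y : edge G') : d.1 != d'.1 ->
  has (on_edge y) (mD f d) -> has (on_edge y) (mD f d') -> 1 < traversals f y.
Proof.
move=> d_neq; rewrite !has_on_edge_mD !has_count /traversals (bigD1 d.1) //=.
rewrite (bigD1 d'.1) /= 1?eq_sym // addnA => a_gt0 b_gt0.
by rewrite ltn_addr // (leq_add a_gt0 b_gt0).
Qed.

Lemma gmap_length_comp G G' G'' (g : gmap G' G'') (f : gmap G G') :
  gmap_length (Defs.comp g f) = \sum_(y < nE G') size (mE g y) * traversals f y.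
Proof.
transitivity (\sum_(e < nE G) \sum_(d <- mE f e) size (mE g d.1)).
  apply: eq_bigr => e _; rewrite size_flatten /shape -map_comp sumnE big_map.
  by apply: eq_bigr => d _; exact: size_mD.
under eq_bigr do rewrite (sum_dart_edge _ (fun y => size (mE g y))).
by rewrite exchange_big; apply: eq_bigr => y _; rewrite big_distrr.
Qed.

Lemma gmap_length_comp_gt G G' G'' (g : gmap G' G'') (f : gmap G G') :
  (forall y, 0 < size (mE g y)) -> (forall y, 0 < traversals f y) ->
  (exists y, 1 < traversals f y) -> gmap_length g < gmap_length (Defs.comp g f).
Proof.
move=> g_gt0 f_onto [y0 f_y0]; rewrite gmap_length_comp /gmap_length.
rewrite [ltnLHS](bigD1 y0) // [ltnRHS](bigD1 y0) //= -addSn leq_add //.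
  by have := g_gt0 y0; nia.
by apply: leq_sum => y _; rewrite leq_pmulr.
Qed.

Lemma dart_edge_neq G (d d' : dart G) : d != d' -> d' != drev d -> d.1 != d'.1.
Proof.
case: d d' => [e b] [e' b'] /= ne1 ne2; apply/eqP => ee; move: ne1 ne2.
by rewrite ee /drev; case: b b' => [] []; rewrite eqxx.
Qed.

Lemma fold_traversals G G1 (f : gmap G G1) :
  is_fold f -> (forall y, 0 < traversals f y) /\ exists y, 1 < traversals f y.
Proof.
move=> [_ [e0 [e1 [e0_neq_e1 e1_neq_re0 _ kind]]]].
have e01 := dart_edge_neq e0_neq_e1 e1_neq_re0.
have in_head (x : dart G1) s : has (on_edge x.1) (x :: s) by rewrite /= /on_edge eqxx.
have in_tail (x x' : dart G1) s : has (on_edge x'.1) (x :: x' :: s).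
  by rewrite /= /on_edge eqxx orbT.
case: kind => [[_ [s [x [s_eq [e1_eq [_ [_ onto]]]]]]]|[]].
- split; last by exists (s e0).1; apply: (traversals_gt1 e01); rewrite ?e1_eq ?s_eq ?in_head.
  move=> y; case: (onto y) => [->|[d [d_neq <-]]].
    by apply: (traversals_gt0 (d := e1)); rewrite e1_eq in_tail.
  by apply: (traversals_gt0 (d := d)); rewrite s_eq ?in_head.
- move=> [_ [_ [s [s_eq [s_iff onto]]]]].
  have s01 : s e0 = s e1 by apply/s_iff; right; left.
  split; last by exists (s e0).1; apply: (traversals_gt1 e01); rewrite s_eq ?s01 ?in_head.
  move=> y; case: (onto (y, true)) => d sd.
  by apply: (traversals_gt0 (d := d)); rewrite s_eq sd /= /on_edge /= eqxx.
- move=> [_ [u [s [a [b [c [_ [_ [_ [s_eq [e0_eq [e1_eq [_ [_ [_ onto]]]]]]]]]]]]]]].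
  split; last by exists a.1; apply: (traversals_gt1 e01); rewrite ?e0_eq ?e1_eq.
  move=> y; case: (onto y) => [|[d [d_neq0 d_neq1 <-]]].
    rewrite !inE => /or3P[] /eqP ->.
    + by apply: (traversals_gt0 (d := e0)); rewrite e0_eq.
    + by apply: (traversals_gt0 (d := e0)); rewrite e0_eq.
    + by apply: (traversals_gt0 (d := e1)); rewrite e1_eq.
  by apply: (traversals_gt0 (d := d)); rewrite s_eq.
Qed.

Lemma iso_edge_size G G' (h : gmap G G') :
  is_iso h -> (forall e, size (mE h e) = 1) /\ nE G = nE G'.
Proof.
move=> [_ [_ [s [s_bij s_eq]]]]; split.
  by move=> e; have := s_eq (e, true); rewrite /mD /= => ->.
have := bij_eq_card s_bij; rewrite !card_prod !card_ord card_bool !muln2.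
exact: double_inj.
Qed.

Lemma fold_chain_length G G' (f : gmap G G') m : fold_chain f m ->
  (forall e, 0 < size (mE f e)) /\ nE G' + m <= gmap_length f.
Proof.
elim=> {G G' f m} [G G' h /iso_edge_size[h_size <-]|].
  split=> [e|]; first by rewrite h_size.
  by rewrite addn0 /gmap_length (eq_bigr (fun=> 1)) ?sum1_card ?card_ord.
move=> G G1 G' f1 g f m f1_fold _ [g_gt0 g_len] [_ f_eq].
have [f1_onto f1_twice] := fold_traversals f1_fold.
have f_len : gmap_length f = gmap_length (Defs.comp g f1).
  by apply: eq_bigr => e _; rewrite f_eq.
split=> [e|]; last by rewrite f_len addnS (leq_ltn_trans g_len) ?gmap_length_comp_gt.
case: f1_fold => /(_ e); rewrite f_eq /=; case: (mE f1 e) => [|d s] //= _ _.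
by rewrite size_cat size_mD (leq_trans (g_gt0 d.1)) ?leq_addr.
Qed.

(** * Walks in irreducible nonnegative integer matrices *)

Section NatMatrixWalks.
Variables (n : nat) (A : 'M[nat]_n).
Local Open Scope ring_scope.
Local Open Scope nat_scope.

Lemma mulmx_nat_gt0 (B C : 'M[nat]_n) i j :
  0 < (B *m C) i j -> exists2 l, 0 < B i l & 0 < C l j.
Proof.
rewrite mxE lt0n sum_nat_eq0 => /forallPn[l /=].
by rewrite muln_eq0 negb_or -!lt0n => /andP[]; exists l.
Qed.

Definition mx_support : rel 'I_n := fun i j => 0 < A i j.

Lemma exp_mx_gt0_connect k i j : 0 < (A ^+ k) i j -> connect mx_support i j.
Proof.
elim: k j => [|k IHk] j; first by rewrite expr0 mxE; case: eqP => // <- _; exact: connect0.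
rewrite exprSr -mulmxE => /mulmx_nat_gt0[l /IHk conn_il A_lj].
exact: connect_trans conn_il (connect1 A_lj).
Qed.

Lemma path_exp_mx_gt0 i p : path mx_support i p -> 0 < (A ^+ size p) i (last i p).
Proof.
elim: p i => [|l p IHp] i /=; first by rewrite expr0 mxE eqxx.
move=> /andP[A_il /IHp pos]; rewrite exprS -mulmxE mxE.
by rewrite (bigD1 l) //= ltn_addr // muln_gt0 pos andbT.
Qed.

Lemma irreducible_short_walk (irr : forall i j, exists k, 0 < (A ^+ k) i j) i j :
  exists2 k, k < n & 0 < (A ^+ k) i j.
Proof.
have [k /exp_mx_gt0_connect/connectP[p walk_p ->]] := irr i j.
case/shortenP: walk_p => p' walk_p' uniq_p' _.
exists (size p'); last exact: path_exp_mx_gt0.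
rewrite -[(size p').+1]/(size (i :: p')) -(card_uniqP uniq_p').
by rewrite (leq_trans (max_card _)) ?card_ord.
Qed.

Lemma rowsum_exp_ge i :
  (forall l, 0 < \sum_j A l j) -> (forall l, exists2 k, k < n & 0 < (A ^+ k) i l) ->
  \sum_l \sum_j A l j + 1 <= \sum_j (A ^+ n) i j + n.
Proof.
move=> rowsum_gt0 reach; set o := fun l => \sum_j A l j.
(* [gain k] bounds the growth of the i-th row sum from [A ^+ k] to [A ^+ k.+1]. *)
pose gain k := \sum_l (0 < (A ^+ k) i l) * (o l).-1.
have step k : \sum_j (A ^+ k) i j + gain k <= \sum_j (A ^+ k.+1) i j.
  have -> : \sum_j (A ^+ k.+1) i j = \sum_l (A ^+ k) i l * o l.
    under eq_bigr do rewrite exprSr -mulmxE mxE.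
    by rewrite exchange_big; apply: eq_bigr => l _; rewrite big_distrr.
  rewrite -big_split /=; apply: leq_sum => l _.
  have := rowsum_gt0 l; rewrite -/(o l).
  case: (posnP ((A ^+ k) i l)) => [-> //|a_gt0 o_gt0].
  by rewrite mul1n -{2}(prednK o_gt0) mulnS leq_add2l leq_pmull.
have total k : 1 + \sum_(k' < k) gain k' <= \sum_j (A ^+ k) i j.
  elim: k => [|k IHk]; first by rewrite big_ord0 expr0 (bigD1 i) //= mxE eqxx.
  by rewrite big_ord_recr /= addnA (leq_trans _ (step k)) // leq_add2r.
have cover : \sum_l (o l).-1 <= \sum_(k < n) gain k.
  rewrite /gain exchange_big /=; apply: leq_sum => l _.
  have [k k_lt_n pos] := reach l.
  by rewrite (bigD1 (Ordinal k_lt_n)) //= pos mul1n leq_addr.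
have -> : \sum_l o l = \sum_l (o l).-1 + n.
  rewrite -[X in _ + X](card_ord n) -sum1_card -big_split /=.
  by apply: eq_bigr => l _; rewrite addn1 prednK ?rowsum_gt0.
have := total n; lia.
Qed.

Lemma irreducible_rowsum_exp_ge i :
  (forall i j, exists k, 0 < k /\ 0 < (A ^+ k) i j) ->
  \sum_l \sum_j A l j + 1 <= \sum_j (A ^+ n) i j + n.
Proof.
move=> irr; apply: rowsum_exp_ge => l; last first.
  by apply: irreducible_short_walk => {}i j; have [k [_ pos]] := irr i j; exists k.
have [[|k] [// _]] := irr l l; rewrite exprS -mulmxE => /mulmx_nat_gt0[m A_lm _].
by rewrite (bigD1 m) //= ltn_addr.
Qed.

End NatMatrixWalks.

Local Open Scope ring_scope.

(** * Real eigenvalues of nonnegative matrices *)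

Section RealClosedPolynomials.
Variable R : rcfType.
Implicit Types (p : {poly R}) (a b : R).

Lemma monic_horner_gt0 p a :
  p \is monic -> (forall x, a <= x -> ~~ root p x) -> 0 < p.[a].
Proof.
move=> p_monic noroot_p; have lc_p : lead_coef p = 1 by exact/monicP.
have [b p_ge1] : exists b, forall x, b <= x -> 1 <= p.[x].
  by rewrite -lc_p; apply: poly_pinfty_gt_lc; rewrite lc_p ltr01.
set c := maxr a b; have a_le_c : a <= c by rewrite le_max lexx.
have pc_gt0 : 0 < p.[c].
  by rewrite (lt_le_trans _ (p_ge1 c _)) ?ltr01 ?le_max ?lexx ?orbT.
rewrite ltNge; apply/negP => pa_le0.
have [|x /andP[a_le_x _]] := poly_ivt a_le_c (_ : p.[a] <= 0 <= p.[c]).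
  by rewrite pa_le0 ltW.
exact/negP/noroot_p.
Qed.

Lemma prev_root_minr p a b :
  p != 0 -> ~~ root p (prev_root p a b) -> prev_root p a b = minr a b.
Proof.
by move=> p_neq0; case: prev_rootP => [/eqP|y _ /rootP ->|//]; rewrite ?(negPf p_neq0).
Qed.

End RealClosedPolynomials.

Section NonnegativeMatrix.
Variables (R : rcfType) (n : nat) (T : 'M[R]_n).
Hypothesis T_ge0 : forall i j, 0 <= T i j.

Lemma horner_char_poly_mx y : map_mx (horner_eval y) (char_poly_mx T) = y%:M - T.
Proof.
by apply/matrixP => i j; rewrite !mxE /horner_eval hornerD hornerN hornerMn hornerX hornerC.
Qed.

Definition adj_rowsum (k : 'I_n) : {poly R} := \sum_j (\adj (char_poly_mx T)) k j.

Lemma horner_adj_rowsum k y : (adj_rowsum k).[y] = \sum_j (\adj (y%:M - T)) k j.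
Proof.
rewrite /adj_rowsum horner_sum -horner_char_poly_mx -map_mx_adj.
by apply: eq_bigr => j _; rewrite [RHS]mxE.
Qed.

Lemma char_poly_adj_rowsum y k :
  (char_poly T).[y] + \sum_j T k j * (adj_rowsum j).[y] = y * (adj_rowsum k).[y].
Proof.
have chiE : (char_poly T).[y] = \sum_j ((y%:M - T) *m \adj (y%:M - T)) k j.
  rewrite mul_mx_adj (bigD1 k) //= big1 => [|j /negPf jk].
    by rewrite mxE eqxx mulr1n addr0 -horner_evalE -det_map_mx horner_char_poly_mx.
  by rewrite mxE eq_sym jk mulr0n.
rewrite chiE; under eq_bigr do rewrite mxE.
rewrite exchange_big /=.
under eq_bigr do rewrite -mulr_sumr -horner_adj_rowsum !mxE mulrBl.
rewrite sumrB (bigD1 k) //= big1 => [|j /negPf jk]; first by rewrite eqxx mulr1n addr0 subrK.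
by rewrite eq_sym jk mulr0n mul0r.
Qed.

Lemma adj_rowsum_gt0_large y k :
  (forall i, \sum_j T i j < y) -> 0 < (char_poly T).[y] -> 0 < (adj_rowsum k).[y].
Proof.
move=> rowsum_lt chi_gt0; set v := fun i => (adj_rowsum i).[y].
have [i0 _ v_min] := @arg_minP _ _ _ k predT v isT.
suff v_i0_gt0 : 0 < v i0 by apply: lt_le_trans (v_min k isT).
have : (char_poly T).[y] <= (y - \sum_j T i0 j) * v i0.
  rewrite mulrBl -char_poly_adj_rowsum mulr_suml -addrA lerDl subr_ge0.
  by apply: ler_sum => j _; apply: ler_wpM2l; rewrite ?v_min.
by move=> /(lt_le_trans chi_gt0); rewrite pmulr_rgt0 // subr_gt0.
Qed.

Lemma adj_rowsum_gt0 z k :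
  (forall y, z <= y -> ~~ root (char_poly T) y) -> 0 < (adj_rowsum k).[z].
Proof.
move=> noroot_chi.
have chi_gt0 y : z <= y -> 0 < (char_poly T).[y].
  move=> z_le_y; apply: monic_horner_gt0 (char_poly_monic T) _ => x y_le_x.
  exact/noroot_chi/(le_trans z_le_y).
pose zs := `|z| + 1 + \sum_i \sum_j T i j.
have sumT_ge0 : 0 <= \sum_i \sum_j T i j by do 2!apply: sumr_ge0 => ? _.
have z_lt_zs : z < zs.
  by rewrite /zs -addrA (le_lt_trans (real_ler_norm (num_real z))) // ltrDl ltr_pwDl.
have v_zs_gt0 j : 0 < (adj_rowsum j).[zs].
  apply: adj_rowsum_gt0_large; last exact/chi_gt0/ltW.
  move=> i; rewrite (le_lt_trans _ (_ : \sum_i \sum_j T i j < zs)) //.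
    by rewrite [leRHS](bigD1 i) //= lerDl sumr_ge0 // => ? _; apply: sumr_ge0.
  by rewrite /zs ltrDr (le_lt_trans (normr_ge0 z)) // ltrDl.
(* Going down from [zs], the first zero [x] of some [adj_rowsum j] would have
   all [adj_rowsum] nonnegative, and then positive by [char_poly_adj_rowsum]. *)
pose P := \prod_j adj_rowsum j.
have P_zs_gt0 : 0 < P.[zs] by rewrite horner_prod prodr_gt0.
have P_neq0 : P != 0 by apply: contraTneq P_zs_gt0 => ->; rewrite horner0 ltxx.
set x := prev_root P z zs.
have z_le_x : z <= x.
  by have := prev_root_in P z zs; rewrite (min_idPl (ltW z_lt_zs)) in_itv => /andP[].
have x_lt_zs : x < zs by exact: prev_root_lt.
have v_x_ge0 j : 0 <= (adj_rowsum j).[x].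
  rewrite leNgt; apply/negP => v_x_lt0.
  have [|r r_in root_r] := poly_ivtoo (ltW x_lt_zs) (_ : _ * (adj_rowsum j).[zs] < 0).
    by rewrite nmulr_rlt0.
  have /negP := prev_noroot r_in; apply.
  by rewrite rootE horner_prod (bigD1 j) //= (rootP root_r) mul0r.
have v_x_gt0 j : 0 < (adj_rowsum j).[x].
  rewrite lt_def v_x_ge0 andbT; apply: contraTneq (chi_gt0 x z_le_x) => v_x0.
  have := char_poly_adj_rowsum x j; rewrite v_x0 mulr0 => /eqP.
  rewrite addr_eq0 => /eqP->.
  by rewrite -leNgt oppr_le0 sumr_ge0 // => i _; rewrite mulr_ge0.
suff -> : z = x by [].
rewrite /x prev_root_minr ?(min_idPl (ltW z_lt_zs)) //.
by rewrite rootE horner_prod gt_eqF // prodr_gt0.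
Qed.

Lemma expanding_contracting_vectors (i0 : 'I_n) z (u v : 'I_n -> R) :
  (forall i, 0 < u i) -> (forall i, z * u i < \sum_j T i j * u j) ->
  (forall i, 0 < v i) -> (forall i, \sum_j T i j * v j < z * v i) -> False.
Proof.
move=> u_gt0 u_exp v_gt0 v_contr.
pose r i := u i / v i.
have [i1 _ r_max] := @arg_maxP _ _ _ i0 predT r isT.
have r_gt0 : 0 < r i1 by rewrite divr_gt0.
have u_le j : u j <= r i1 * v j by rewrite -ler_pdivrMr ?v_gt0 //; exact: r_max.
have u_i1 : u i1 = r i1 * v i1 by rewrite /r divfK ?gt_eqF.
have := u_exp i1; rewrite ltNge => /negP; apply.
apply: (@le_trans _ _ (r i1 * \sum_j T i1 j * v j)).
  by rewrite mulr_sumr ler_sum // => j _; rewrite mulrCA ler_wpM2l.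
by rewrite u_i1 mulrCA ler_pM2l // ltW.
Qed.

Lemma expanding_vector_char_poly_root (i0 : 'I_n) z (u : 'I_n -> R) :
  (forall i, 0 < u i) -> (forall i, z * u i < \sum_j T i j * u j) ->
  ~ (forall y, z <= y -> ~~ root (char_poly T) y).
Proof.
move=> u_gt0 u_exp noroot_chi.
apply: (@expanding_contracting_vectors i0 z u (fun i => (adj_rowsum i).[z]) u_gt0 u_exp).
  by move=> i; exact: adj_rowsum_gt0.
move=> i; rewrite -char_poly_adj_rowsum ltrDr.
exact: monic_horner_gt0 (char_poly_monic T) noroot_chi.
Qed.

Lemma exp_mx_ge0 k i j : 0 <= (T ^+ k) i j.
Proof.
elim: k i j => [|k IHk] i j; first by rewrite expr0 mxE ler0n.
by rewrite exprS -mulmxE mxE sumr_ge0 // => l _; rewrite mulr_ge0.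
Qed.

Lemma rowsum_mul (A B : 'M[R]_n) i :
  \sum_j (A * B) i j = \sum_l A i l * \sum_j B l j.
Proof.
under eq_bigr do rewrite -mulmxE mxE.
by rewrite exchange_big; under [RHS]eq_bigr do rewrite mulr_sumr.
Qed.

Lemma rowsumB (A B : 'M[R]_n) i :
  \sum_j (A - B) i j = \sum_j A i j - \sum_j B i j.
Proof. by rewrite -sumrB; apply: eq_bigr => j _; rewrite !mxE. Qed.

Lemma rowsum_scalar_mx a i : \sum_j (a%:M : 'M[R]_n) i j = a.
Proof.
rewrite (bigD1 i) //= mxE eqxx mulr1n big1 ?addr0 // => j /negPf ji.
by rewrite mxE eq_sym ji.
Qed.

Lemma rowsum_exp_expanding_vector z N : 0 < z ->
  (forall i, z ^+ N.+1 < \sum_j (T ^+ N.+1) i j) ->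
  exists2 u : 'I_n -> R, forall i, 0 < u i & forall i, z * u i < \sum_j T i j * u j.
Proof.
move=> z_gt0 rowsum_gt; have z_ge0 := ltW z_gt0.
pose S := \sum_(k < N.+1) z%:M ^+ (N - k) * T ^+ k.
have SE i j : S i j = \sum_(k < N.+1) z ^+ (N - k) * (T ^+ k) i j.
  rewrite summxE; apply: eq_bigr => k _.
  by rewrite -rmorphXn -mulmxE mul_scalar_mx mxE.
have telescope : (z ^+ N.+1)%:M - T ^+ N.+1 = (z%:M - T) * S.
  by rewrite rmorphXn subrXX_comm // /GRing.comm -!mulmxE scalar_mxC.
clearbody S.
have S_ge0 i j : 0 <= S i j.
  by rewrite SE sumr_ge0 // => k _; rewrite mulr_ge0 ?exprn_ge0 ?exp_mx_ge0.
exists (fun i => \sum_j S i j) => i.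
  apply: (lt_le_trans (exprn_gt0 N z_gt0)); rewrite (bigD1 i) //= SE big_ord_recl.
  rewrite subn0 expr0 mxE eqxx mulr1 -addrA lerDl addr_ge0 ?sumr_ge0 // => k _.
  by rewrite mulr_ge0 ?exprn_ge0 ?exp_mx_ge0.
have : \sum_j ((z ^+ N.+1)%:M - T ^+ N.+1) i j < 0.
  by rewrite rowsumB rowsum_scalar_mx subr_lt0.
rewrite telescope mulrBl [z%:M * S]mul_scalar_mx rowsumB rowsum_mul subr_lt0.
by under eq_bigr do rewrite mxE; rewrite -mulr_sumr.
Qed.

End NonnegativeMatrix.

Lemma rowsum_exp_root_le_largest_eigenvalue n N (A : 'M[nat]_n) (s : nat) (lam : algC) :
  (0 < n)%N -> (0 < s)%N -> (forall i, s <= \sum_j (A ^+ N.+1)%R i j)%N ->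
  largest_eigenvalue (map_mx (GRing.natmul 1) A) lam -> N.+1.-root s%:R <= lam.
Proof.
move=> n_gt0 s_gt0 rowsum_ge [eig_lam [lam_real lam_max]].
have rho_gt0 : 0 < N.+1.-root (s%:R : algC) by rewrite rootC_gt0 // ltr0n.
pose rho := in_algR (gtr0_real rho_gt0); pose lamR := in_algR lam_real.
have rhoX : rho ^+ N.+1 = s%:R by apply: val_inj; rewrite /= rmorphXn rmorph_nat rootCK.
rewrite (real_leNgt (gtr0_real rho_gt0) lam_real); apply/negP => lam_lt_rho.
have {}lam_lt_rho : lamR < rho by [].
pose z := (maxr lamR 0 + rho) / 2.
have /midf_lt[lt_max_z z_lt_rho] : maxr lamR 0 < rho by rewrite gt_max lam_lt_rho.
have z_gt0 : 0 < z by apply: le_lt_trans lt_max_z; rewrite le_max lexx orbT.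
(* The spectral argument needs a real closed field: work in algR. *)
pose TR := map_mx (GRing.natmul 1) A : 'M[algR]_n.
have TR_ge0 i j : 0 <= TR i j by rewrite mxE ler0n.
have [//|i|u u_gt0 u_exp] := rowsum_exp_expanding_vector TR_ge0 (z := z) (N := N).
  rewrite -rmorphXn; under eq_bigr do rewrite mxE; rewrite -natr_sum.
  apply: (@lt_le_trans _ _ (rho ^+ N.+1)); first by rewrite ltrXn2r // ltW.
  by rewrite rhoX ler_nat.
apply: (expanding_vector_char_poly_root TR_ge0 (Ordinal n_gt0) u_gt0 u_exp) => y z_le_y.
apply/negP => root_y.
have : algRval y <= lam.
  apply: lam_max; last exact: algRvalP.
  have -> : map_mx (GRing.natmul 1) A = map_mx algRval TR.
    by apply/matrixP => i j; rewrite !mxE rmorph_nat.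
  by rewrite eigenvalue_root_char -map_char_poly rmorph_root.
rewrite -[_ <= _]/(y <= lamR) leNgt (lt_le_trans _ z_le_y) //.
by apply: le_lt_trans lt_max_z; rewrite le_max lexx.
Qed.

Theorem theoremA (G : graph) (f : gmap G G) (m : nat) (lam : algC) :
  is_graph_map f ->
  irreducible_map f ->
  is_heq f ->
  has_fold_decomposition f m ->
  largest_eigenvalue (transition f) lam ->
  (nE G).-root ((m + 1)%:R) <= lam.
Proof.
move=> _ [irr _] _ /fold_chain_length[_ len_ge] eig.
pose c : 'M[nat]_(nE G) := \matrix_(i, j) count (on_edge j) (mE f i).
have Tc : transition f = map_mx (GRing.natmul 1) c by apply/matrixP => i j; rewrite !mxE.
have n_gt0 : (0 < nE G)%N.
  case: (eig) => + _; rewrite eigenvalue_root_char.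
  by move=> /(root_size_gt1 (monic_neq0 (char_poly_monic _))); rewrite size_char_poly.
have irr_c i j : exists k, (0 < k)%N /\ (0 < (c ^+ k) i j)%N.
  by have [k [k_gt0]] := irr i j; rewrite Tc -rmorphXn mxE ltr0n; exists k.
have len_c : (\sum_l \sum_j c l j = gmap_length f)%N.
  by apply: eq_bigr => l _; under eq_bigr do rewrite mxE; rewrite count_on_edge_sum.
rewrite -[in X in X.-root _](prednK n_gt0).
apply: (rowsum_exp_root_le_largest_eigenvalue (A := c)); rewrite -?Tc ?addn1 // => i.
by rewrite prednK //; have := irreducible_rowsum_exp_ge i irr_c; lia.
Qed.
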